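(* Let $B$ be a metric space, $\mu$ a measure on $B$, let $c,v>0$ satisfy $c=\frac{v-n}{n(v+1)}$, and let $f:B\to\mathbb R^n$ be a map such that the following condition fails: ''for every $d>c$ there exists $T>0$ such that for all $t\ge T$ and all $\Gamma\in\mathfrak P_{n+1}$, $\|g_tu_{f(\cdot)}\Gamma\|_{\mu,B}\ge e^{-\mathrm{rk}(\Gamma)dt}$.'' Then there exists $u>v$ such that $f(B\cap\operatorname{supp}\mu)\subset\mathcal W_u$.
   Context: For a row vector $y\in\mathbb R^n$, $u_y=\begin{pmatrix}1&y\\0&I_n\end{pmatrix}$ and $g_t=\mathrm{diag}(e^t,e^{-t/n},\dots,e^{-t/n})$, acting on column vectors of $\mathbb R^{n+1}$. $\mathfrak P_{n+1}$ is the set of nonzero primitive subgroups of $\mathbb Z^{n+1}$; $\mathrm{rk}$ is rank; $\|\Gamma\|$ is the Euclidean covolume of $\Gamma$ in its real span. $\|g\|_{\mu,B}=\sup_{B\cap\operatorname{supp}\mu}|g|$. For $u>0$, $\mathcal W_u$ is the set of $y\in\mathbb R^n$ for which there are infinitely many $q\in\mathbb Z^n$ with $|\sum y_iq_i+p|<\|q\|^{-u}$ for some $p\in\mathbb Z$. *)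

From HB Require Import structures.
From mathcomp Require Import all_boot all_order all_algebra.
From mathcomp Require Import all_classical all_reals all_analysis.
Set Implicit Arguments. Unset Strict Implicit. Unset Printing Implicit Defensive.
Import Order.TTheory GRing.Theory Num.Theory.
Import numFieldNormedType.Exports.
Local Open Scope classical_set_scope.
Local Open Scope ring_scope.

Section Defs.
Variable R : realType.

Definition u_mx (n : nat) (y : 'rV[R]_n) : 'M[R]_(1 + n) :=
  block_mx 1%:M y 0 1%:M.

Definition g_mx (n : nat) (t : R) : 'M[R]_(1 + n) :=
  \matrix_(i, j) (if i == j then
                   (if (i : nat) == 0%N then expR t else expR (- (t / n%:R)))
                 else 0).

Definition int_vec (m : nat) : set 'cV[R]_m :=
  [set v | forall i, exists z : int, v i 0 = z%:~R].

Definition real_span (m : nat) (G : set 'cV[R]_m) : set 'cV[R]_m :=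
  [set v | exists (k : nat) (M : 'M[R]_(m, k)) (a : 'cV[R]_k),
      (forall j, G (col j M)) /\ v = M *m a].

Definition subgroup_Zm (m : nat) (G : set 'cV[R]_m) : Prop :=
  G `<=` @int_vec m /\ G 0 /\ (forall x y, G x -> G y -> G (x - y)).

Definition primitive_subgroup (m : nat) (G : set 'cV[R]_m) : Prop :=
  subgroup_Zm G /\ G <> [set 0] /\ G = real_span G `&` @int_vec m.

Definition Zspan (m k : nat) (M : 'M[R]_(m, k)) : set 'cV[R]_m :=
  [set M *m map_mx (fun z : int => z%:~R) z | z in [set: 'cV[int]_k]].

(* the columns of M : 'M_(m,k) form a Z-basis of G (so rk G = k) *)
Definition is_basis (m k : nat) (G : set 'cV[R]_m) (M : 'M[R]_(m, k)) : Prop :=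
  \rank M = k /\ G = Zspan M.

(* Euclidean covolume, in its real span, of the lattice with basis the
   columns of M: sqrt(det(M^T M)) *)
Definition covol (m k : nat) (M : 'M[R]_(m, k)) : R :=
  Num.sqrt (\det (M^T *m M)).

Definition supp (B : pseudoPMetricType R)
  (mu : {measure set (g_sigma_algebraType (@open B)) -> \bar R}) : set B :=
  [set x | forall U : set B, open U -> U x -> (0 < mu U)%E].

Definition supnorm (B : pseudoPMetricType R)
  (mu : {measure set (g_sigma_algebraType (@open B)) -> \bar R})
  (h : B -> R) : \bar R :=
  ereal_sup [set (`|h x|)%:E | x in supp mu].

Definition eucl_norm (n : nat) (q : 'rV[int]_n) : R :=
  Num.sqrt (\sum_(i < n) ((q 0 i)%:~R) ^+ 2).

Definition W_set (n : nat) (u : R) : set 'rV[R]_n :=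
  [set y | infinite_set [set q : 'rV[int]_n | exists p : int,
      `| \sum_(i < n) y 0 i * (q 0 i)%:~R + p%:~R | < eucl_norm q `^ (- u)]].

End Defs.

(* If the condition fails, there are d > c and arbitrarily large t such that, at every
   x in B /\ supp mu, some primitive subgroup of rank k has covolume < e^(-k d t) after
   applying g_t u_(f x).  Hermite's inequality, proved by induction through Schur
   complements with constant 2^(k(k-1)), then gives a nonzero integer vector (p, q) with
   |g_t u_(f x) (p, q)| <= C e^(-d t), i.e. |<f x, q> + p| <= C e^(-(1+d) t) and
   |q| <= C e^((1/n - d) t).  For u = v + (d - c) the exponent (1 + d) - u (1/n - d) is
   positive, so |<f x, q> + p| < |q|^(-u) with |<f x, q> + p| arbitrarily small once t is
   large: this gives infinitely many such q, unless <f x, q> + p = 0 for some q <> 0, in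
   which case the multiples of q do. *)

From HB Require Import structures.
From mathcomp Require Import all_boot all_order all_algebra.
From mathcomp Require Import all_classical all_reals all_analysis.
From mathcomp Require Import ring lra.
Import Order.TTheory GRing.Theory Num.Theory.
Import numFieldNormedType.Exports.
Local Open Scope classical_set_scope.
Local Open Scope ring_scope.

Set Implicit Arguments.
Unset Strict Implicit.
Unset Printing Implicit Defensive.

Section QuadraticForm.
Variable F : fieldType.

Definition qform k (G : 'M[F]_k) (z : 'cV[F]_k) : F := (z^T *m G *m z) 0 0.

Lemma qform_mulmx k (G U : 'M[F]_k) z : qform (U^T *m G *m U) z = qform G (U *m z).
Proof. by rewrite /qform trmx_mul !mulmxA. Qed.

Lemma qformZ k (G : 'M[F]_k) c z : qform G (c *: z) = c ^+ 2 * qform G z.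
Proof.
rewrite /qform (_ : (c *: z)^T = c *: z^T); last exact: linearZ.
by rewrite -!scalemxAl -scalemxAr !mxE mulrA -expr2.
Qed.

Lemma qform_delta k (G : 'M[F]_k.+1) : qform G (delta_mx 0 0) = G 0 0.
Proof. by rewrite /qform trmx_delta -rowE -colE !mxE. Qed.

Lemma qform_block_diag k l (A : 'M[F]_k) (D : 'M[F]_l) u w :
  qform (block_mx A 0 0 D) (col_mx u w) = qform A u + qform D w.
Proof.
rewrite /qform tr_col_mx mul_row_block !mulmx0 addr0 add0r mul_row_col.
by rewrite mxE.
Qed.

Lemma qform_col_mx0 k l (G : 'M[F]_(k + l)) u :
  qform G (col_mx u 0) = qform (ulsubmx G) u.
Proof.
rewrite /qform -{1}(submxK G) tr_col_mx trmx0 mul_row_block !mul0mx !addr0.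
by rewrite mul_row_col mulmx0 addr0.
Qed.

Lemma qform_scalar (A : 'M[F]_1) (x : F) : qform A x%:M = A 0 0 * x ^+ 2.
Proof. by rewrite /qform tr_scalar_mx mul_scalar_mx mul_mx_scalar !mxE; ring. Qed.

Section Schur.
Variables (k : nat) (G : 'M[F]_(1 + k)).
Hypotheses (G_sym : G^T = G) (G00_neq0 : ulsubmx G 0 0 != 0).

Definition schur : 'M[F]_k :=
  drsubmx G - (ulsubmx G 0 0)^-1 *: (dlsubmx G *m (dlsubmx G)^T).

Definition schur_lower : 'M[F]_(1 + k) :=
  block_mx 1%:M 0 ((ulsubmx G 0 0)^-1 *: dlsubmx G) 1%:M.

Lemma schur_sym : schur^T = schur.
Proof. by rewrite /schur linearB /= linearZ /= trmx_mul trmxK trmx_drsub G_sym. Qed.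

Lemma schur_factor :
  G = schur_lower *m block_mx (ulsubmx G) 0 0 schur *m schur_lower^T.
Proof.
have hur : ursubmx G = (dlsubmx G)^T by rewrite trmx_dlsub G_sym.
rewrite /schur_lower tr_block_mx !trmx1 !trmx0 linearZ /=.
rewrite !mulmx_block !mul1mx !mul0mx !mulmx0 !mulmx1 !addr0 !add0r.
set a := ulsubmx G 0 0; set b := dlsubmx G.
have aK : a * a^-1 = 1 by rewrite mulfV.
rewrite [ulsubmx G]mx11_scalar -/a mul_scalar_mx mul_mx_scalar !scalerA aK !scale1r.
rewrite -scalemxAr -/b /schur -/a -/b addrC subrK -hur -mx11_scalar.
by rewrite submxK.
Qed.

Lemma qform_col_mx (x : F) (y : 'cV[F]_k) :
  qform G (col_mx x%:M y) =
    ulsubmx G 0 0 * (x + ((dlsubmx G)^T *m y) 0 0 / ulsubmx G 0 0) ^+ 2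
    + qform schur y.
Proof.
rewrite {1}schur_factor -{1}(trmxK schur_lower) qform_mulmx /schur_lower.
rewrite tr_block_mx !trmx1 !trmx0 mul_block_col !mul1mx !mul0mx add0r.
rewrite qform_block_diag linearZ /= -scalemxAl {1}[_ *m y]mx11_scalar scale_scalar_mx.
by rewrite -raddfD /= qform_scalar [_^-1 * _]mulrC.
Qed.

Lemma det_schur : \det G = ulsubmx G 0 0 * \det schur.
Proof.
rewrite {1}schur_factor !det_mulmx det_tr /schur_lower det_lblock det_ublock.
by rewrite !det1 det_mx11 !mul1r mulr1.
Qed.

End Schur.
End QuadraticForm.

Section PositiveDefinite.
Variable R : realFieldType.

Definition posdef k (G : 'M[R]_k) := forall z, z != 0 -> 0 < qform G z.

Lemma posdef_congr k (G U : 'M[R]_k) :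
  U \in unitmx -> posdef G -> posdef (U^T *m G *m U).
Proof.
move=> Uu Gpd z zn0; rewrite qform_mulmx; apply: Gpd.
by apply: contra zn0 => /eqP Uz0; rewrite -(mulKmx Uu z) Uz0 mulmx0.
Qed.

Lemma posdef_pivot_gt0 k (G : 'M[R]_(1 + k)) : posdef G -> 0 < ulsubmx G 0 0.
Proof.
move=> Gpd; have := Gpd (col_mx 1%:M 0).
rewrite qform_col_mx0 qform_scalar expr1n mulr1; apply.
by rewrite col_mx_eq0 negb_and oner_neq0.
Qed.

Lemma posdef_schur k (G : 'M[R]_(1 + k)) :
  G^T = G -> posdef G -> posdef (schur G).
Proof.
move=> Gs Gpd y yn0; have a0 := lt0r_neq0 (posdef_pivot_gt0 Gpd).
have := Gpd (col_mx (- (((dlsubmx G)^T *m y) 0 0 / ulsubmx G 0 0))%:M y).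
rewrite qform_col_mx // addNr expr0n /= mulr0 add0r.
by apply; rewrite col_mx_eq0 negb_and yn0 orbT.
Qed.

Lemma posdef_det_gt0 k (G : 'M[R]_k.+1) : G^T = G -> posdef G -> 0 < \det G.
Proof.
elim: k G => [|k IH] G Gs Gpd.
  by have := Gpd 1%:M (oner_neq0 _); rewrite qform_scalar expr1n mulr1 det_mx11.
have Gpd' : @posdef (1 + k.+1) G := Gpd.
rewrite (det_schur Gs (lt0r_neq0 (posdef_pivot_gt0 Gpd'))).
rewrite mulr_gt0 ?posdef_pivot_gt0 // IH ?schur_sym //; exact: posdef_schur.
Qed.

Definition sqnorm m (w : 'cV[R]_m) : R := (w^T *m w) 0 0.

Lemma sqnormE m (w : 'cV[R]_m) : sqnorm w = \sum_i w i 0 ^+ 2.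
Proof. by rewrite /sqnorm mxE; apply: eq_bigr => i _; rewrite mxE expr2. Qed.

Lemma sqnorm_ge0 m (w : 'cV[R]_m) : 0 <= sqnorm w.
Proof. by rewrite sqnormE sumr_ge0 // => i _; rewrite sqr_ge0. Qed.

Lemma sqnorm_gt0 m (w : 'cV[R]_m) : w != 0 -> 0 < sqnorm w.
Proof.
move=> wn0; rewrite lt_def sqnorm_ge0 andbT sqnormE.
apply: contra wn0 => /eqP /psumr_eq0P w0; apply/eqP/matrixP => i j.
by rewrite (ord1 j) mxE; apply/eqP; rewrite -sqrf_eq0 w0 // => k _; rewrite sqr_ge0.
Qed.

Lemma qform_gram m k (B : 'M[R]_(m, k)) z : qform (B^T *m B) z = sqnorm (B *m z).
Proof. by rewrite /qform /sqnorm trmx_mul !mulmxA. Qed.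

Lemma gram_posdef m k (B : 'M[R]_(m, k)) : \rank B = k -> posdef (B^T *m B).
Proof.
move=> Brk; have [C CB] : exists C, C *m B = 1%:M by apply/row_fullP; rewrite /row_full Brk.
move=> z zn0; rewrite qform_gram; apply: sqnorm_gt0.
by apply: contra zn0 => /eqP Bz0; rewrite -(mul1mx z) -CB -mulmxA Bz0 mulmx0.
Qed.

End PositiveDefinite.

Section IntegerVectors.
Variable R : realType.

Lemma map_intr_eq0 m n (z : 'M[int]_(m, n)) :
  (map_mx intr z == 0 :> 'M[R]_(m, n)) = (z == 0).
Proof.
apply/eqP/eqP => [/matrixP zE|->]; last by rewrite map_mx0.
by apply/matrixP => i j; have /eqP := zE i j; rewrite !mxE intr_eq0 => /eqP.
Qed.

Lemma int_col_primitive m (z : 'cV[int]_m.+1) : z != 0 ->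
  exists2 L : 'M[int]_m.+1, L \in unitmx &
    exists2 c : int, c != 0 & z = c *: col 0 L.
Proof.
move=> zn0; have [L Lu [Q _ [d _ zE]]] := int_Smith_normal_form z.
exists L => //.
have dE : (\matrix_(i, j) (d`_i *+ (i == j :> nat)) : 'M[int]_(m.+1, 1))
    = d`_0 *: delta_mx 0 0.
  apply/matrixP => i j; rewrite !mxE (ord1 j) /=.
  by case: (unliftP 0 i) => [i'|] -> /=; rewrite ?mulr0 ?mulr0n // mulr1 mulr1n.
rewrite dE [Q]mx11_scalar mul_mx_scalar -scalemxAr scalerA -colE in zE.
exists (Q 0 0 * d`_0) => //.
by apply: contra zn0 => /eqP c0; rewrite zE c0 scale0r.
Qed.

Lemma det_unimodular_congr k (L : 'M[int]_k) (G : 'M[R]_k) :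
  L \in unitmx -> \det ((map_mx intr L)^T *m G *m map_mx intr L) = \det G.
Proof.
rewrite unitmxE => /orP[] /eqP detL.
all: by rewrite !det_mulmx det_tr det_map_mx detL; ring.
Qed.

Lemma sqr_intr_ge1 (c : int) : c != 0 -> 1 <= (c%:~R : R) ^+ 2.
Proof.
by move=> c0; rewrite -rmorphXn ler1z -gtz0_ge1 exprn_even_gt0 //= c0.
Qed.

End IntegerVectors.

Section Hermite.
Variable R : realType.

Lemma posdef_int_min k (G : 'M[R]_k.+1) : G^T = G -> posdef G ->
  exists2 e, 0 < e & forall z : 'cV[int]_k.+1, z != 0 ->
    e <= qform G (map_mx intr z).
Proof.
elim: k G => [|k IH] G Gs Gpd.
  have G0 : 0 < G 0 0.
    by have := Gpd 1%:M (oner_neq0 _); rewrite qform_scalar expr1n mulr1.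
  exists (G 0 0) => // z zn0.
  rewrite [z]mx11_scalar map_scalar_mx qform_scalar ler_peMr ?sqr_intr_ge1 ?ltW //.
  apply/eqP => z0; move/eqP: zn0; apply.
  by rewrite [z]mx11_scalar z0 raddf0.
move: G Gs Gpd; rewrite -[k.+2]/(1 + k.+1)%N => G Gs Gpd.
have a0 := posdef_pivot_gt0 Gpd.
have [e e0 eS] := IH _ (schur_sym Gs) (posdef_schur Gs Gpd).
exists (Num.min (ulsubmx G 0 0) e) => [|z zn0]; first by rewrite lt_min a0 e0.
rewrite -(vsubmxK z) in zn0 *; move: (usubmx z) (dsubmx z) zn0 => x y.
rewrite [x]mx11_scalar map_col_mx map_scalar_mx (qform_col_mx Gs (lt0r_neq0 a0)).
have [-> xn0|yn0 _] := eqVneq y 0.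
  have x0 : x 0 0 != 0 by apply: contra xn0 => /eqP->; rewrite raddf0 col_mx0.
  set a := ulsubmx G 0 0 in a0 *.
  rewrite map_mx0 mulmx0 mxE mul0r addr0 /qform mulmx0 mxE addr0.
  by rewrite ge_min ler_peMr ?(ltW a0) // (sqr_intr_ge1 R x0).
rewrite ge_min orbC (le_trans (eS _ yn0)) // lerDr.
by rewrite mulr_ge0 ?sqr_ge0 ?ltW.
Qed.

(* A vector within a factor 2 of the minimum is enough for [hermite_step], and avoids
   proving that the minimum is attained. *)
Lemma exists_near_min k (G : 'M[R]_k.+1) : G^T = G -> posdef G ->
  exists2 z : 'cV[int]_k.+1, z != 0 & forall w : 'cV[int]_k.+1, w != 0 ->
    qform G (map_mx intr z) < 2 * qform G (map_mx intr w).
Proof.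
move=> Gs Gpd; have [e e0 eG] := posdef_int_min Gs Gpd.
set E := [set qform G (map_mx intr w) | w in [set w : 'cV[int]_k.+1 | w != 0]].
have En0 : nonempty E.
  exists (qform G (map_mx intr (delta_mx 0 0))), (delta_mx 0 0) => //=.
  by apply/eqP => /matrixP/(_ 0 0)/eqP; rewrite !mxE eqxx oner_eq0.
have Elb : lbound E e by move=> _ [w wn0 <-]; exact: eG.
have Einf : has_inf E by split => //; exists e.
have inf0 : 0 < inf E := lt_le_trans e0 (lb_le_inf En0 Elb).
have [_ [z zn0 <-] zE] := inf_adherent inf0 Einf.
exists z => // w wn0.
have : inf E <= qform G (map_mx intr w) by apply: ge_inf; [exact: Einf.2 | exists w].
by move: zE; rewrite -mulr2n mulr_natl; lra.
Qed.

Lemma exists_int_near (r : R) : exists m : int, (m%:~R + r) ^+ 2 <= 4^-1.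
Proof.
exists (- Num.floor (r + 2^-1)).
have := floor_le (r + 2^-1); have := floorD1_gt (r + 2^-1).
rewrite intrD intrN; nra.
Qed.

(* 4^(1 + 2 + ... + k): the constant produced by the induction in [hermite]. *)
Definition hermite_const k : R := 2 ^+ (k * k.+1).

Lemma hermite_constS k : hermite_const k.+1 = 4 ^+ k.+1 * hermite_const k.
Proof.
rewrite /hermite_const (_ : 4 = 2 ^+ 2) -?exprM -?exprD; last by rewrite expr2; ring.
by congr (_ ^+ _); ring.
Qed.

Lemma hermite_const_ge1 k : 1 <= hermite_const k.
Proof. by rewrite exprn_ege1 // ler1n. Qed.

Lemma hermite_const_le k m : (k <= m)%N -> hermite_const k <= hermite_const m.
Proof. by move=> km; rewrite ler_eXn2l ?ltr1n // leq_mul. Qed.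

(* Rounding the first coordinate gives a lattice vector of value at most a/4 + v, with a
   the pivot and v the value of z for the Schur complement; near-minimality of the first
   basis vector then forces a <= 4 v. *)
Lemma hermite_step k (G : 'M[R]_(1 + k.+1)) (z : 'cV[int]_k.+1) :
  G^T = G -> posdef G ->
  (forall w : 'cV[int]_(1 + k.+1), w != 0 ->
     ulsubmx G 0 0 < 2 * qform G (map_mx intr w)) ->
  z != 0 ->
  qform (schur G) (map_mx intr z) ^+ k.+1 <= hermite_const k * \det (schur G) ->
  ulsubmx G 0 0 ^+ k.+2 <= hermite_const k.+1 * \det G.
Proof.
move=> Gs Gpd Gmin zn0 hz.
have a0 := posdef_pivot_gt0 Gpd.
rewrite (det_schur Gs (lt0r_neq0 a0)) hermite_constS.
set a := ulsubmx G 0 0 in a0 Gmin *; set v := qform (schur G) (map_mx intr z) in hz.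
have v0 : 0 <= v by apply/ltW/(posdef_schur Gs Gpd); rewrite map_intr_eq0.
have [m hm] := exists_int_near (((dlsubmx G)^T *m map_mx intr z) 0 0 / a).
have := Gmin (col_mx m%:M z); rewrite col_mx_eq0 negb_and zn0 orbT.
rewrite map_col_mx map_scalar_mx (qform_col_mx Gs (lt0r_neq0 a0)) -/a -/v => /(_ isT) hw.
have a4v : a <= 4 * v by have := ler_wpM2l (ltW a0) hm; lra.
have ak : a ^+ k.+1 <= 4 ^+ k.+1 * (hermite_const k * \det (schur G)).
  apply: le_trans (_ : (4 * v) ^+ k.+1 <= _); first by rewrite lerXn2r // nnegrE; lra.
  by rewrite exprMn ler_pM2l // exprn_gt0.
rewrite exprS (_ : _ * _ * _ = a * (4 ^+ k.+1 * (hermite_const k * \det (schur G)))).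
  by rewrite ler_pM2l.
by ring.
Qed.

Theorem hermite k (G : 'M[R]_k.+1) : G^T = G -> posdef G ->
  exists2 z : 'cV[int]_k.+1, z != 0 &
    qform G (map_mx intr z) ^+ k.+1 <= hermite_const k * \det G.
Proof.
elim: k G => [|k IH] G Gs Gpd.
  exists 1%:M; first exact: oner_neq0.
  rewrite map_scalar_mx qform_scalar /= expr1 det_mx11 (_ : 1%:~R = 1 :> R) //.
  by rewrite expr1n mulr1 /hermite_const mul0n expr0 mul1r.
have [z zn0 zmin] := exists_near_min Gs Gpd.
have [L Lu [c c0 zE]] := int_col_primitive zn0.
have L0n0 : col 0 L != 0 by apply: contra zn0 => /eqP L0; rewrite zE L0 scaler0.
set U := map_mx intr L : 'M[R]_k.+2.
have Uu : U \in unitmx by rewrite unitmxE det_map_mx rmorph_unit // -unitmxE.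
have mapL w : map_mx intr (L *m w) = U *m map_mx intr w by rewrite map_mxM.
(* In the basis L the primitive vector col 0 L comes first. *)
pose G' : 'M[R]_(1 + k.+1) := U^T *m G *m U.
have G's : G'^T = G' by rewrite /G' !trmx_mul trmxK Gs mulmxA.
have G'pd : posdef G' := posdef_congr Uu Gpd.
have G'00 : ulsubmx G' 0 0 = qform G (map_mx intr (col 0 L)).
  rewrite colE mapL -qform_mulmx map_delta_mx qform_delta [LHS]mxE [LHS]mxE.
  by rewrite (_ : lshift k.+1 (0 : 'I_1) = 0 :> 'I_k.+2) //; apply: val_inj.
have G'min (w : 'cV[int]_(1 + k.+1)) :
    w != 0 -> ulsubmx G' 0 0 < 2 * qform G' (map_mx intr w).
  move=> wn0; rewrite G'00 qform_mulmx -mapL; apply: le_lt_trans (zmin _ _).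
    by rewrite zE map_mxZ qformZ ler_peMl ?(sqr_intr_ge1 R c0) // ltW // Gpd ?map_intr_eq0.
  by apply: contra wn0 => /eqP Lw0; rewrite -(mulKmx Lu w) Lw0 mulmx0.
have [z' z'n0 hz'] := IH _ (schur_sym G's) (posdef_schur G's G'pd).
exists (col 0 L) => //; rewrite -G'00 -(det_unimodular_congr G Lu).
exact: hermite_step G's G'pd G'min z'n0 hz'.
Qed.

End Hermite.

Section Lattice.
Variable R : realType.

Lemma is_basis0 m (G : set 'cV[R]_m) (M : 'M[R]_(m, 0)) : is_basis G M -> G = [set 0].
Proof.
move=> [_ ->]; apply/seteqP; split => [_ [z _ <-]|_ ->]; first by rewrite thinmx0 mul0mx.
by exists 0 => //; rewrite thinmx0 mul0mx.
Qed.

Lemma short_lattice_vector m k (A : 'M[R]_m) (G : set 'cV[R]_m) (M : 'M[R]_(m, k.+1)) :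
  A \in unitmx -> is_basis G M ->
  exists2 w, G w /\ w != 0 &
    sqnorm (A *m w) ^+ k.+1 <= hermite_const R k * covol (A *m M) ^+ 2.
Proof.
move=> Au [Mrk ->].
have AMrk : \rank (A *m M) = k.+1.
  by rewrite -mxrank_tr trmx_mul mxrankMfree ?mxrank_tr // row_free_unit unitmx_tr.
have Gs : ((A *m M)^T *m (A *m M))^T = (A *m M)^T *m (A *m M) by rewrite trmx_mul trmxK.
have Gpd := gram_posdef AMrk.
have [z zn0 hz] := hermite Gs Gpd.
exists (M *m map_mx intr z).
  split; first by exists z.
  have := Gpd (map_mx intr z); rewrite map_intr_eq0 qform_gram -mulmxA => /(_ zn0).
  by apply: contraTneq => ->; rewrite mulmx0 /sqnorm mulmx0 mxE ltxx.
rewrite /covol sqr_sqrtr; last exact/ltW/posdef_det_gt0.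
by rewrite mulmxA -qform_gram.
Qed.

Lemma le_of_expn_le_scale (X Y C : R) k : 0 <= X -> 0 <= Y -> 1 <= C ->
  X ^+ k.+1 <= C * Y ^+ k.+1 -> X <= C * Y.
Proof.
move=> X0 Y0 C1 hX; rewrite leNgt; apply/negP => hlt.
have C0 : 0 <= C by rewrite (le_trans ler01).
have hC : C * Y ^+ k.+1 <= (C * Y) ^+ k.+1.
  by rewrite exprMn ler_wpM2r ?exprn_ge0 // exprS ler_peMr ?exprn_ege1.
by have := le_trans hX hC; rewrite leNgt ltrXn2r // ?nnegrE ?mulr_ge0 // hlt.
Qed.

Lemma short_vector_of_small_covol m k (A : 'M[R]_m) (G : set 'cV[R]_m)
    (M : 'M[R]_(m, k.+1)) (delta : R) :
  A \in unitmx -> is_basis G M -> 0 <= delta -> covol (A *m M) <= delta ^+ k.+1 ->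
  exists2 w, G w /\ w != 0 & sqnorm (A *m w) <= hermite_const R m * delta ^+ 2.
Proof.
move=> Au GM delta0 AMdelta; have [w Gw hw] := short_lattice_vector Au GM.
exists w => //; apply: (le_of_expn_le_scale (k := k)); rewrite ?sqnorm_ge0 ?exprn_ge0 //.
  exact: hermite_const_ge1.
apply: (le_trans hw); rewrite -exprM mulnC exprM ler_pM ?exprn_ge0 //.
- exact: sqrtr_ge0.
- by apply/hermite_const_le/ltnW; rewrite -GM.1 rank_leq_row.
- by rewrite lerXn2r // nnegrE ?exprn_ge0 // sqrtr_ge0.
Qed.

End Lattice.

Section Flow.
Variables (R : realType) (n : nat).

Definition lform (y : 'rV[R]_n) (q : 'rV[int]_n) : R := \sum_(i < n) y 0 i * (q 0 i)%:~R.

Lemma g_mx_block t : g_mx n t =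
  block_mx (expR t)%:M 0 0 (expR (- (t / n%:R)))%:M :> 'M[R]_(1 + n).
Proof.
apply/matrixP => i j; rewrite !mxE.
case: (splitP i) => i' hi; rewrite !mxE; case: (splitP j) => j' hj; rewrite !mxE.
- rewrite !ord1 in hi hj *; rewrite /= mulr1n.
  by rewrite (_ : i == j) ?hi //; apply/eqP/val_inj; rewrite /= hi hj.
- rewrite ord1 in hi; rewrite (_ : i == j = false) //.
  by apply/negbTE; apply/eqP => /(congr1 val); rewrite /= hi hj.
- rewrite ord1 in hj; rewrite (_ : i == j = false) //.
  by apply/negbTE; apply/eqP => /(congr1 val); rewrite /= hi hj.
- rewrite hi /= (_ : (i == j) = (i' == j')); last by rewrite -val_eqE /= hi hj eqn_add2l.
  by case: (i' == j') => //=; rewrite mulr1n.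
Qed.

Lemma gu_unit t (y : 'rV[R]_n) : g_mx n t *m u_mx y \in unitmx.
Proof.
rewrite unitmxE det_mulmx g_mx_block /u_mx !det_ublock !det_scalar !expr1n mulr1.
by rewrite unitfE !mulf_eq0 !expf_eq0 !expR_eq0 oner_eq0 !andbF.
Qed.

Lemma sqnorm_gu t (y : 'rV[R]_n) (x : R) (z : 'cV[R]_n) :
  sqnorm (g_mx n t *m u_mx y *m col_mx x%:M z) =
    (expR t * (x + (y *m z) 0 0)) ^+ 2 + expR (- (t / n%:R)) ^+ 2 * sqnorm z.
Proof.
rewrite -mulmxA /u_mx g_mx_block !mul_block_col !mul1mx !mul0mx !add0r !addr0.
set e1 := expR t; set e2 := expR _.
rewrite !mul_scalar_mx /sqnorm tr_col_mx mul_row_col !linearZ /= -!scalemxAl.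
rewrite [y *m z]mx11_scalar -raddfD /= tr_scalar_mx -scalar_mxM !mxE /=.
by rewrite !mulr1n; ring.
Qed.

Lemma int_vec_col_mx (w : 'cV[R]_(1 + n)) : int_vec w ->
  exists (p : int) (q : 'rV[int]_n), w = col_mx (p%:~R)%:M (map_mx intr q)^T.
Proof.
move=> wZ; set W := map_mx (@Num.floor R) w.
have -> : w = map_mx intr W.
  by apply/matrixP => i j; rewrite !mxE (ord1 j); have [z ->] := wZ i; rewrite intrKfloor.
exists (usubmx W 0 0), (dsubmx W)^T.
by rewrite -map_trmx trmxK -map_scalar_mx -mx11_scalar -map_col_mx vsubmxK.
Qed.

Lemma eucl_normE (q : 'rV[int]_n) : eucl_norm R q ^+ 2 = \sum_(i < n) (q 0 i)%:~R ^+ 2 :> R.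
Proof. by rewrite sqr_sqrtr // sumr_ge0 // => i _; rewrite sqr_ge0. Qed.

Lemma sqnorm_gu_int t (y : 'rV[R]_n) (p : int) (q : 'rV[int]_n) :
  sqnorm (g_mx n t *m u_mx y *m col_mx (p%:~R)%:M (map_mx intr q)^T) =
    (expR t * (lform y q + p%:~R)) ^+ 2 + expR (- (t / n%:R)) ^+ 2 * eucl_norm R q ^+ 2.
Proof.
rewrite sqnorm_gu sqnormE eucl_normE mxE /lform [_%:~R + _]addrC.
by congr ((_ * (_ + _)) ^+ 2 + _ * _); apply: eq_bigr => i _; rewrite !mxE.
Qed.

End Flow.

Section Approximation.
Variables (R : realType) (n : nat) (y : 'rV[R]_n).

Lemma norm_le_of_sqr_le (x c : R) : 0 <= c -> x ^+ 2 <= c ^+ 2 -> `|x| <= c.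
Proof.
move=> c0 xc; have : `|x| ^+ 2 <= c ^+ 2 by rewrite real_normK ?num_real.
by rewrite ler_pXn2r // nnegrE.
Qed.

Lemma expR_le_powRN (a X u : R) :
  0 < a -> a <= expR X -> 0 <= u -> expR (- (u * X)) <= a `^ (- u).
Proof.
move=> a0 aX u0; rewrite /powR gt_eqF // ler_expR mulNr lerN2 ler_wpM2l //.
by rewrite -ler_expR lnK.
Qed.

Lemma small_gu_bounds t L d (p : int) (q : 'rV[int]_n) :
  (expR t * (lform y q + p%:~R)) ^+ 2 + expR (- (t / n%:R)) ^+ 2 * eucl_norm R q ^+ 2
    <= expR (L - d * t) ^+ 2 ->
  `|lform y q + p%:~R| <= expR (L - d * t - t) /\
  eucl_norm R q <= expR (L - d * t + t / n%:R).
Proof.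
set r := lform y q + p%:~R; set N := eucl_norm R q => hsmall.
have /(norm_le_of_sqr_le (expR_ge0 _)) hr : (expR t * r) ^+ 2 <= expR (L - d * t) ^+ 2.
  by apply: le_trans hsmall; rewrite lerDl mulr_ge0 ?sqr_ge0.
have /(norm_le_of_sqr_le (expR_ge0 _)) hN :
    (expR (- (t / n%:R)) * N) ^+ 2 <= expR (L - d * t) ^+ 2.
  by apply: le_trans hsmall; rewrite exprMn lerDr sqr_ge0.
rewrite normrM ger0_norm ?expR_ge0 // in hr.
rewrite ger0_norm ?mulr_ge0 ?expR_ge0 ?sqrtr_ge0 // in hN.
split.
  by rewrite -(ler_pM2l (expR_gt0 t)) -expRD (le_trans hr) // ler_expR; lra.
rewrite -(ler_pM2l (expR_gt0 (- (t / n%:R)))) -expRD (le_trans hN) //.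
by rewrite ler_expR; lra.
Qed.

Lemma eucl_norm_ge1 (q : 'rV[int]_n) : q != 0 -> 1 <= eucl_norm R q.
Proof.
move=> qn0; have [j qj] : exists j, q 0 j != 0.
  apply/existsP; apply: contraR qn0 => /existsPn q0.
  by apply/eqP/matrixP => i j; rewrite (ord1 i) mxE; apply/eqP/negPn/q0.
rewrite -(ler_pXn2r (_ : 0 < 2)%N) ?nnegrE ?sqrtr_ge0 // expr1n eucl_normE.
rewrite (bigD1 j) //= -[leLHS]addr0 lerD ?sqr_intr_ge1 //.
by apply: sumr_ge0 => i _; exact: sqr_ge0.
Qed.

Lemma approx_of_small_gu (L d u : R) : 0 <= L -> 0 < d -> 0 < u ->
  0 < 1 + d - u * (n%:R^-1 - d) ->
  forall T, exists2 T0, 0 < T0 & forall t, T0 <= t ->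
  forall (p : int) (q : 'rV[int]_n), (q != 0) || (p != 0) ->
    (expR t * (lform y q + p%:~R)) ^+ 2 + expR (- (t / n%:R)) ^+ 2 * eucl_norm R q ^+ 2
      <= expR (L - d * t) ^+ 2 ->
  [/\ q != 0, `|lform y q + p%:~R| < eucl_norm R q `^ (- u)
            & `|lform y q + p%:~R| < expR (- T)].
Proof.
move=> L0 d0 u0; set g := 1 + d - _ => g0 T.
have hT0 : 0 <= (L + `|T|) / (1 + d) by rewrite divr_ge0 ?addr_ge0 //; lra.
have hT1 : 0 <= (1 + u) * L / g by rewrite divr_ge0 ?mulr_ge0 //; lra.
exists (1 + (L + `|T|) / (1 + d) + (1 + u) * L / g) => [|t ht p q qp]; first lra.
move=> /small_gu_bounds [hr hN]; set r := lform y q + p%:~R in hr *.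
have h1 : L + `|T| < t * (1 + d) by rewrite -ltr_pdivrMr; lra.
rewrite mulrDr mulr1 [t * d]mulrC in h1.
have h2 : (1 + u) * L < t * g by rewrite -ltr_pdivrMr; lra.
have T0 := normr_ge0 T; have TT := ler_norm T.
have eg : t * g = t + d * t - u * (t / n%:R) + u * (d * t) by rewrite /g; ring.
have rT : `|r| < expR (- T) by apply: le_lt_trans hr _; rewrite ltr_expR; lra.
have q0 : q != 0.
  case/orP: qp => // p0; apply/eqP => q0; move: hr; rewrite /r q0 /lform big1 => [|i _].
    rewrite add0r -intr_norm; apply/negP; rewrite -ltNge (@lt_le_trans _ _ 1) //.
      by rewrite expR_lt1; lra.
    by rewrite ler1z -gtz0_ge1 normr_gt0.
  by rewrite mxE mulr0.
have N0 : 0 < eucl_norm R q by apply: lt_le_trans (eucl_norm_ge1 q0).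
split => //; apply: le_lt_trans hr _.
apply: lt_le_trans (expR_le_powRN N0 hN (ltW u0)); rewrite ltr_expR.
have : (1 + u) * L = L + u * L by ring.
have : u * (L - d * t + t / n%:R) = u * L - u * (d * t) + u * (t / n%:R) by ring.
lra.
Qed.

Lemma lformZ (m : int) (q : 'rV[int]_n) : lform y (m *: q) = m%:~R * lform y q.
Proof.
by rewrite /lform mulr_sumr; apply: eq_bigr => i _; rewrite mxE intrM mulrCA.
Qed.

Lemma eucl_normZ (m : int) (q : 'rV[int]_n) :
  eucl_norm R (m *: q) = `|m%:~R| * eucl_norm R q.
Proof.
rewrite /eucl_norm -sqrtr_sqr -sqrtrM ?sqr_ge0 // mulr_sumr.
by congr Num.sqrt; apply: eq_bigr => i _; rewrite mxE intrM exprMn.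
Qed.

Definition int_dist (r : R) : R :=
  Num.min (r - (Num.floor r)%:~R) ((Num.floor r + 1)%:~R - r).

Lemma int_dist_le r (p : int) : int_dist r <= `|r + p%:~R|.
Proof.
have := floor_le r; have := floorD1_gt r; rewrite /int_dist intrD.
set m := Num.floor r => r_lt r_ge.
have [pm|pm] := leP (- m) p.
  have : (- m)%:~R <= p%:~R :> R by rewrite ler_int.
  rewrite intrN ge_min => pm'; rewrite ger0_norm; last lra.
  by apply/orP; left; lra.
have : p%:~R <= (- m - 1)%:~R :> R by rewrite ler_int -ltzD1 subrK.
rewrite intrB intrN ge_min => pm'; rewrite ltr0_norm; last lra.
by apply/orP; right; lra.
Qed.

Lemma int_dist_gt0 r : (forall p : int, r + p%:~R != 0) -> 0 < int_dist r.
Proof.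
move=> rZ; have := floor_le r; have := floorD1_gt r; have := rZ (- Num.floor r).
rewrite /int_dist intrD intrN lt_min => /negPf r_neq r_lt r_ge.
by apply/andP; split; rewrite ?subr_gt0 // lt_def -subr_eq0 r_neq r_ge.
Qed.

Lemma W_set_of_exact_relation (u : R) (q0 : 'rV[int]_n) (p0 : int) :
  0 < u -> q0 != 0 -> lform y q0 + p0%:~R = 0 -> W_set u y.
Proof.
move=> u0 q00 r0 /(finite_seqP _).1 [s sE].
set B := \big[Num.max/0]_(q <- s) eucl_norm R q.
have B0 : 0 <= B by exact: bigmax_ge_id.
set m := Num.floor B + 1; have Bm : B < m%:~R by apply: floorD1_gt.
have m0 : 0 < m%:~R :> R by apply: le_lt_trans Bm.
have N1 := eucl_norm_ge1 q00.
have mq0 : [set` s] (m *: q0).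
  rewrite -sE; exists (m * p0).
  change (`|lform y (m *: q0) + (m * p0)%:~R| < eucl_norm R (m *: q0) `^ (- u)).
  rewrite lformZ intrM -mulrDr r0 mulr0 normr0 powR_gt0 // eucl_normZ mulr_gt0 //.
    by rewrite normr_gt0 lt0r_neq0.
  by apply: lt_le_trans N1.
have := le_bigmax_seq (0 : R) (m *: q0) xpredT (fun q => eucl_norm R q) mq0 isT.
rewrite -/B eucl_normZ ger0_norm ?(ltW m0) // => mB.
have : m%:~R <= m%:~R * eucl_norm R q0 by rewrite ler_peMr // ltW.
lra.
Qed.

Lemma W_set_of_approx (u : R) : 0 < u ->
  (forall T, exists (q : 'rV[int]_n) (p : int),
     [/\ q != 0, `|lform y q + p%:~R| < eucl_norm R q `^ (- u)
               & `|lform y q + p%:~R| < expR (- T)]) ->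
  W_set u y.
Proof.
move=> u0 happrox.
have [[q0 [p0 [q00 r0]]]|inexact] :=
  pselect (exists q0 p0, q0 != 0 /\ lform y q0 + p0%:~R = 0).
  exact: W_set_of_exact_relation u0 q00 r0.
move=> /(finite_seqP _).1 [s sE].
set delta := \big[Num.min/1]_(q <- s | q != 0) int_dist (lform y q).
have delta0 : 0 < delta.
  apply: (big_ind (fun x => 0 < x)) => // [a b a0 b0|q qn0]; first by rewrite lt_min a0.
  by apply: int_dist_gt0 => p; apply/eqP => rq; apply: inexact; exists q, p.
have [q [p [qn0 hq]]] := happrox (- ln delta).
rewrite opprK lnK ?posrE // => hdelta.
have qs : [set` s] q by rewrite -sE; exists p.
have := ge_bigmin_seq (1 : R) q (fun q => q != 0) (fun q => int_dist (lform y q)) qs qn0.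
by move/le_trans/(_ (int_dist_le _ p)); rewrite leNgt hdelta.
Qed.

Lemma W_set_of_small_gu (K d u : R) : 1 <= K -> 0 < d -> 0 < u ->
  0 < 1 + d - u * (n%:R^-1 - d) ->
  (forall T, 0 < T -> exists2 t, T <= t & exists2 w, int_vec w /\ w != 0 &
     sqnorm (g_mx n t *m u_mx y *m w) <= K * expR (- (d * t)) ^+ 2) ->
  W_set u y.
Proof.
move=> K1 d0 u0 g0 hsmall; apply: (W_set_of_approx u0) => T.
set L := ln K / 2; have L0 : 0 <= L by rewrite divr_ge0 ?ln_ge0.
have KL t : K * expR (- (d * t)) ^+ 2 = expR (L - d * t) ^+ 2.
  rewrite -!expRM_natl -[K]lnK ?posrE ?(lt_le_trans ltr01) // -expRD.
  by congr expR; rewrite /L; field.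
have [T0 T00 hT0] := approx_of_small_gu L0 d0 u0 g0 T.
have [t tT0 [w [wZ wn0] hw]] := hsmall T0 T00.
have [p [q wE]] := int_vec_col_mx wZ.
rewrite wE sqnorm_gu_int KL in hw.
have qp : (q != 0) || (p != 0).
  apply: contraR wn0; rewrite negb_or !negbK wE => /andP[/eqP-> /eqP->].
  by rewrite map_mx0 trmx0 raddf0 col_mx0.
by have [] := hT0 t tT0 p q qp hw; exists q, p.
Qed.

Lemma W_set_of_small_covol (d u : R) : 0 < d -> 0 < u ->
  0 < 1 + d - u * (n%:R^-1 - d) ->
  (forall T, 0 < T -> exists2 t, T <= t &
     exists2 G : set 'cV[R]_(1 + n), primitive_subgroup G &
     exists k (M : 'M[R]_(1 + n, k)), is_basis G M /\
       covol (g_mx n t *m u_mx y *m M) < expR (- (k%:R * d * t))) ->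
  W_set u y.
Proof.
move=> d0 u0 g0 hsmall.
apply: (W_set_of_small_gu (hermite_const_ge1 R (1 + n)) d0 u0 g0) => T T0.
have [t tT [G Gprim [[|k] [M [GM hcov]]]]] := hsmall T T0; exists t => //.
  by case: Gprim => _ [+ _]; rewrite (is_basis0 GM).
have {}hcov : covol (g_mx n t *m u_mx y *m M) <= expR (- (d * t)) ^+ k.+1.
  by rewrite -expRM_natl mulrN mulrA ltW.
have [w [Gw wn0] hw] := short_vector_of_small_covol (gu_unit t y) GM (expR_ge0 _) hcov.
by exists w => //; split => //; exact: Gprim.1.1 _ Gw.
Qed.

End Approximation.

(* The exponent vanishes at d = c, u = v: this is where the value of c comes from. *)
Lemma exponent_gap_gt0 (R : realFieldType) (n : nat) (c v d : R) :
  (0 < n)%N -> 0 < c -> 0 < v -> c = (v - n%:R) / (n%:R * (v + 1)) -> c < d ->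
  0 < 1 + d - (v + (d - c)) * (n%:R^-1 - d).
Proof.
move=> n0 c0 v0 cE cd; have n1 : n%:R^-1 <= 1 :> R by rewrite invf_le1 ?ler1n ?ltr0n.
have -> : 1 + d - (v + (d - c)) * (n%:R^-1 - d) = (d - c) * (1 + v - n%:R^-1 + d).
  by rewrite cE; field; rewrite pnatr_eq0 -lt0n n0 /=; apply/eqP; lra.
by rewrite mulr_gt0 //; lra.
Qed.

Lemma le_supnorm (R : realType) (B : pseudoPMetricType R)
    (mu : {measure set (g_sigma_algebraType (@open B)) -> \bar R}) (h : B -> R) x :
  supp mu x -> (`|h x|%:E <= supnorm mu h)%E.
Proof. by move=> xs; apply: ereal_sup_ubound; exists x. Qed.

Unset Implicit Arguments.
Set Strict Implicit.

Theorem lemma4p1 (R : realType) (n : nat) (hn : (0 < n)%N)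
  (B : pseudoPMetricType R) (hB : hausdorff_space B)
  (mu : {measure set (g_sigma_algebraType (@open B)) -> \bar R})
  (c v : R) (hc : 0 < c) (hv : 0 < v)
  (hcv : c = (v - n%:R) / (n%:R * (v + 1)))
  (f : B -> 'rV[R]_n)
  (hfail : ~ (forall d : R, c < d -> exists T : R, 0 < T /\
        forall t : R, T <= t ->
        forall (G : set 'cV[R]_(1 + n)), primitive_subgroup G ->
        forall (k : nat) (M : 'M[R]_(1 + n, k)), is_basis G M ->
          ((expR (- (k%:R * d * t)))%:E <=
             supnorm mu (fun x => covol (g_mx n t *m u_mx (f x) *m M)))%E)) :
  exists u : R, v < u /\ f @` (supp mu) `<=` W_set u.
Proof.
have [d cd Hd] : exists2 d, c < d & forall T, 0 < T -> exists2 t, T <= t &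
    exists2 G : set 'cV[R]_(1 + n), primitive_subgroup G &
    exists k (M : 'M[R]_(1 + n, k)), is_basis G M /\
      (supnorm mu (fun x => covol (g_mx n t *m u_mx (f x) *m M))
         < (expR (- (k%:R * d * t)))%:E)%E.
  apply: contrapT => hn'; apply: hfail => d hd.
  apply: contrapT => hT; apply: hn'; exists d => // T T0.
  apply: contrapT => ht; apply: hT; exists T; split => // t Tt G hG k M hM.
  rewrite leNgt; apply/negP => hlt; apply: ht.
  by exists t => //; exists G => //; exists k, M.
exists (v + (d - c)); split => [|_ [x xs <-]]; first lra.
apply: (W_set_of_small_covol _ _ (exponent_gap_gt0 hn hc hv hcv cd)); [lra | lra |].
move=> T T0; have [t tT [G Gprim [k [M [GM hsup]]]]] := Hd T T0.
exists t => //; exists G => //; exists k, M; split => //.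
by have := le_lt_trans (le_supnorm _ xs) hsup; rewrite lte_fin ger0_norm // sqrtr_ge0.
Qed.
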